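(* Let $n\ge2$ and let $T_1,\dots,T_n$ be distinct triangles in $E$, and let $S$ be the set of vertices of the polygon $\bigcap_{i=1}^nT_i$. Then $|S|=3n$.
   Context: For $d>0$ let $C_d=\{(x,y)\in\mathbb{R}^2: x^2+y^2\le d\}$, and $C=C_1$. $E$ is the set of all equilateral triangles $T\subseteq C$ whose vertices lie on the boundary of $C$. *)

From Stdlib Require Import Reals List.
Open Scope R_scope.

Definition point := (R * R)%type.

Definition sqdist (p q : point) : R :=
  (fst p - fst q) ^ 2 + (snd p - snd q) ^ 2.

Definition Cd (d : R) (p : point) : Prop := fst p ^ 2 + snd p ^ 2 <= d.
Definition Cdisk : point -> Prop := Cd 1.

Definition on_circle (p : point) : Prop := fst p ^ 2 + snd p ^ 2 = 1.

Definition triangle (A B Q : point) (p : point) : Prop :=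
  exists a b c : R, 0 <= a /\ 0 <= b /\ 0 <= c /\ a + b + c = 1 /\
    p = (a * fst A + b * fst B + c * fst Q, a * snd A + b * snd B + c * snd Q).

Definition in_E (T : point -> Prop) : Prop :=
  (forall p, T p -> Cdisk p) /\
  exists A B Q : point,
    on_circle A /\ on_circle B /\ on_circle Q /\
    0 < sqdist A B /\ sqdist A B = sqdist B Q /\ sqdist B Q = sqdist Q A /\
    (forall p, T p <-> triangle A B Q p).

Definition vertex (K : point -> Prop) (p : point) : Prop :=
  K p /\
  ~ (exists (x y : point) (t : R), K x /\ K y /\ x <> y /\ 0 < t < 1 /\
       p = (t * fst x + (1 - t) * fst y, t * snd x + (1 - t) * snd y)).

(* intersection of T_0, ..., T_{n-1} *)
Definition big_inter (n : nat) (T : nat -> point -> Prop) (p : point) : Prop :=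
  forall i, (i < n)%nat -> T i p.

From Pilot Require Import Defs.
From Stdlib Require Import Reals List Lra Lia Psatz Classical ClassicalEpsilon.
Import ListNotations.
Open Scope R_scope.

(* A triangle of E has its vertices A, B, Q on the unit circle with A + B + Q = 0,
   and it is the set of points p with [dot p X >= -1/2] for its three vertices X:
   its sides are tangent to the circle of radius 1/2, with outward unit normals
   -A, -B, -Q.  Hence the intersection of n such triangles is the polygon cut out
   by 3n tangent lines of that circle, and these are distinct because an inscribed
   equilateral triangle is determined by any one of its vertices.  A polygon cut out
   by finitely many distinct tangent lines of a circle, every normal having another
   one strictly less than a half-turn counterclockwise from it, has exactly one
   vertex per tangent line: the edge on the tangent line of u ends where it meets the
   tangent line of the next normal after u counterclockwise. *)

Definition dot (p q : point) : R := fst p * fst q + snd p * snd q.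
Definition cross (p q : point) : R := fst p * snd q - snd p * fst q.
Definition opp (p : point) : point := (- fst p, - snd p).
Definition unit_vec (p : point) : Prop := fst p ^ 2 + snd p ^ 2 = 1.

Lemma dot_comm u v : dot u v = dot v u.
Proof. unfold dot; ring. Qed.

Lemma dot_opp_r p u : dot p (opp u) = - dot p u.
Proof. unfold dot, opp; simpl; ring. Qed.

Lemma cross_anti u v : cross u v = - cross v u.
Proof. unfold cross; ring. Qed.

Lemma cross_self v : cross v v = 0.
Proof. unfold cross; ring. Qed.

Lemma cross_opp u v : cross (opp u) (opp v) = cross u v.
Proof. unfold cross, opp; simpl; ring. Qed.

Lemma unit_vec_opp u : unit_vec u -> unit_vec (opp u).
Proof. unfold unit_vec, opp; simpl; intros H; nra. Qed.

Lemma dot_unit_self u : unit_vec u -> dot u u = 1.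
Proof. unfold unit_vec, dot; intros H; nra. Qed.

Lemma lagrange_identity a b :
  dot a b ^ 2 + cross a b ^ 2 = (fst a ^ 2 + snd a ^ 2) * (fst b ^ 2 + snd b ^ 2).
Proof. unfold dot, cross; ring. Qed.

Lemma sum_sq_eq0 x y : x ^ 2 + y ^ 2 = 0 -> x = 0 /\ y = 0.
Proof. intros H; pose proof (pow2_ge_0 x); pose proof (pow2_ge_0 y); split; nra. Qed.

Lemma sqdist_eq0 a b : sqdist a b = 0 -> a = b.
Proof.
  destruct a as [a1 a2], b as [b1 b2]; unfold sqdist; simpl; intros H.
  destruct (sum_sq_eq0 _ _ H); f_equal; lra.
Qed.

Lemma sqdist_unit a b : unit_vec a -> unit_vec b -> sqdist a b = 2 - 2 * dot a b.
Proof.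
  unfold unit_vec; intros Ha Hb.
  replace (sqdist a b) with ((fst a ^ 2 + snd a ^ 2) + (fst b ^ 2 + snd b ^ 2) - 2 * dot a b)
    by (unfold sqdist, dot; ring).
  rewrite Ha, Hb; ring.
Qed.

Lemma unit_dot_le1 a b : unit_vec a -> unit_vec b -> dot a b <= 1.
Proof.
  intros Ha Hb; pose proof (sqdist_unit a b Ha Hb).
  assert (0 <= sqdist a b) by (unfold sqdist; pose proof (pow2_ge_0 (fst a - fst b));
                               pose proof (pow2_ge_0 (snd a - snd b)); lra).
  lra.
Qed.

Lemma unit_dot_ge_m1 a b : unit_vec a -> unit_vec b -> -1 <= dot a b.
Proof.
  intros Ha Hb; pose proof (unit_dot_le1 a (opp b) Ha (unit_vec_opp b Hb)).
  rewrite dot_opp_r in *; lra.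
Qed.

Lemma unit_dot_lt1 a b : unit_vec a -> unit_vec b -> a <> b -> dot a b < 1.
Proof.
  intros Ha Hb Hab; pose proof (unit_dot_le1 a b Ha Hb).
  destruct (Req_dec (dot a b) 1) as [E|]; [|lra].
  exfalso; apply Hab, sqdist_eq0; rewrite sqdist_unit, E by auto; ring.
Qed.

Lemma eq_of_dot_independent a b x y :
  cross a b <> 0 -> dot x a = dot y a -> dot x b = dot y b -> x = y.
Proof.
  destruct a as [a1 a2], b as [b1 b2], x as [x1 x2], y as [y1 y2]; unfold cross, dot; simpl.
  intros Hab Ha Hb.
  assert (E1 : (x1 - y1) * (a1 * b2 - a2 * b1) = 0).
  { transitivity (b2 * (x1 * a1 + x2 * a2 - (y1 * a1 + y2 * a2))
                  - a2 * (x1 * b1 + x2 * b2 - (y1 * b1 + y2 * b2))); [ring|].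
    rewrite Ha, Hb; ring. }
  assert (E2 : (x2 - y2) * (a1 * b2 - a2 * b1) = 0).
  { transitivity (a1 * (x1 * b1 + x2 * b2 - (y1 * b1 + y2 * b2))
                  - b1 * (x1 * a1 + x2 * a2 - (y1 * a1 + y2 * a2))); [ring|].
    rewrite Ha, Hb; ring. }
  apply Rmult_integral in E1; apply Rmult_integral in E2.
  f_equal; lra.
Qed.

Lemma sq_eq_cases x y : x ^ 2 = y ^ 2 -> x = y \/ x = - y.
Proof.
  intros H; assert (E : (x - y) * (x + y) = 0) by (transitivity (x ^ 2 - y ^ 2); [ring | lra]).
  apply Rmult_integral in E; lra.
Qed.

Lemma eq_of_dot_cross p u w : fst p ^ 2 + snd p ^ 2 <> 0 ->
  dot p u = dot p w -> cross p u = cross p w -> u = w.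
Proof.
  intros Hp Hd Hc.
  apply (eq_of_dot_independent p (- snd p, fst p)).
  - unfold cross; simpl; intros E; apply Hp; lra.
  - rewrite !(dot_comm _ p); auto.
  - revert Hc; unfold cross, dot; simpl; lra.
Qed.

Lemma at_most_two_tangents p a b c :
  unit_vec a -> unit_vec b -> unit_vec c ->
  dot p a = 1/2 -> dot p b = 1/2 -> dot p c = 1/2 -> a = b \/ a = c \/ b = c.
Proof.
  intros Ha Hb Hc Da Db Dc.
  assert (Hp : fst p ^ 2 + snd p ^ 2 <> 0).
  { intros E; apply sum_sq_eq0 in E as [E1 E2]; unfold dot in Da; rewrite E1, E2 in Da; lra. }
  assert (Sq : forall u, unit_vec u -> dot p u = 1/2 ->
                 cross p u ^ 2 = fst p ^ 2 + snd p ^ 2 - 1/4).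
  { intros u Hu Du; pose proof (lagrange_identity p u) as L.
    rewrite Hu, Du in L; lra. }
  destruct (sq_eq_cases (cross p a) (cross p b)) as [Eab|Eab];
    [rewrite !Sq by auto; reflexivity | left; apply (eq_of_dot_cross p); congruence |].
  destruct (sq_eq_cases (cross p c) (cross p a)) as [Eca|Eca];
    [rewrite !Sq by auto; reflexivity | right; left; apply (eq_of_dot_cross p); congruence |].
  right; right; apply (eq_of_dot_cross p); [auto | congruence | lra].
Qed.

Lemma tangents_not_parallel p a b :
  unit_vec a -> unit_vec b -> a <> b -> dot p a = 1/2 -> dot p b = 1/2 -> cross a b <> 0.
Proof.
  intros Ha Hb Hab Da Db C.
  pose proof (lagrange_identity a b) as L; rewrite Ha, Hb, C in L.
  destruct (sq_eq_cases (dot a b) 1) as [E|E]; [lra| |].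
  - pose proof (unit_dot_lt1 a b Ha Hb Hab); lra.
  - assert (Eab : a = opp b).
    { apply sqdist_eq0; rewrite sqdist_unit, dot_opp_r, E by auto using unit_vec_opp; ring. }
    rewrite Eab, dot_opp_r in Da; lra.
Qed.

Lemma tangents_meet_once a b x y :
  unit_vec a -> unit_vec b -> a <> b ->
  dot x a = 1/2 -> dot x b = 1/2 -> dot y a = 1/2 -> dot y b = 1/2 -> x = y.
Proof.
  intros Ha Hb Hab Xa Xb Ya Yb.
  apply (eq_of_dot_independent a b); [apply (tangents_not_parallel x) | |]; auto; congruence.
Qed.

Lemma exists_argmin {A : Type} (P : A -> Prop) (g : A -> R) (l : list A) :
  (exists a, In a l /\ P a) ->
  exists a, In a l /\ P a /\ forall b, In b l -> P b -> g a <= g b.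
Proof.
  induction l as [|x l IH]; intros [a [Ha Pa]]; [destruct Ha|].
  destruct (classic (exists a, In a l /\ P a)) as [Hl|Hl].
  - destruct (IH Hl) as (m & Hm & Pm & Hmin).
    destruct (classic (P x /\ g x < g m)) as [[Px Hx]|Hx].
    + exists x; split; [left; auto | split; auto].
      intros b [<-|Hb] Pb; [lra|]; specialize (Hmin b Hb Pb); lra.
    + exists m; split; [right; auto | split; auto].
      intros b [<-|Hb] Pb; auto; apply Rnot_lt_le; tauto.
  - destruct Ha as [<-|Ha]; [|exfalso; eauto].
    exists x; split; [left; auto | split; auto].
    intros b [<-|Hb] Pb; [lra | exfalso; eauto].
Qed.

Definition shift (p : point) (s : R) (d : point) : point :=
  (fst p + s * fst d, snd p + s * snd d).

Lemma dot_shift p s d u : dot (shift p s d) u = dot p u + s * dot d u.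
Proof. unfold dot, shift; simpl; ring. Qed.

Lemma dot_convex_comb x y t u :
  dot (t * fst x + (1 - t) * fst y, t * snd x + (1 - t) * snd y) u
  = t * dot x u + (1 - t) * dot y u.
Proof. unfold dot; simpl; ring. Qed.

(* [tangent_pt v t] runs along the tangent line [dot p v = 1/2] of the circle of
   radius 1/2; [meet_param v w] is the parameter where it meets the tangent line of [w]. *)
Definition tangent_pt (v : point) (t : R) : point :=
  (fst v / 2 - t * snd v, snd v / 2 + t * fst v).
Definition meet_param (v w : point) : R := (1 - dot v w) / (2 * cross v w).
Definition corner (v w : point) : point := tangent_pt v (meet_param v w).

Lemma dot_tangent_pt v t u : dot (tangent_pt v t) u = dot v u / 2 + t * cross v u.
Proof. unfold dot, tangent_pt, cross; simpl; field. Qed.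

Lemma tangent_pt_cross v p : unit_vec v -> dot p v = 1/2 -> p = tangent_pt v (cross v p).
Proof.
  destruct p as [p1 p2], v as [v1 v2]; unfold unit_vec, dot, tangent_pt, cross; cbn [fst snd].
  intros Hv Hp; f_equal.
  - transitivity (p1 * (v1 ^ 2 + v2 ^ 2)); [rewrite Hv; ring|].
    replace (v1 / 2) with (v1 * (p1 * v1 + p2 * v2)) by (rewrite Hp; field); ring.
  - transitivity (p2 * (v1 ^ 2 + v2 ^ 2)); [rewrite Hv; ring|].
    replace (v2 / 2) with (v2 * (p1 * v1 + p2 * v2)) by (rewrite Hp; field); ring.
Qed.

Lemma meet_param_cross v w : cross v w <> 0 -> meet_param v w * cross v w = (1 - dot v w) / 2.
Proof. intros H; unfold meet_param; field; auto. Qed.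

Lemma corner_on_tangent_l v w : unit_vec v -> dot (corner v w) v = 1/2.
Proof.
  intros Hv; unfold corner; rewrite dot_tangent_pt, cross_self, dot_unit_self by auto; lra.
Qed.

Lemma corner_on_tangent_r v w : cross v w <> 0 -> dot (corner v w) w = 1/2.
Proof. intros H; unfold corner; rewrite dot_tangent_pt, meet_param_cross by auto; lra. Qed.

Section TangentPolygon.

Variable L : list point.
Hypothesis L_unit : forall u, In u L -> unit_vec u.

Definition tangent_polygon (p : point) : Prop := forall u, In u L -> dot p u <= 1/2.

Lemma polygon_slack p : tangent_polygon p ->
  exists e, 0 < e /\ forall u, In u L -> dot p u <> 1/2 -> e <= 1/2 - dot p u.
Proof.
  intros Hp; destruct (classic (exists u, In u L /\ dot p u <> 1/2)) as [H|H].
  - destruct (exists_argmin _ (fun u => 1/2 - dot p u) L H) as (u & Hu & Pu & Hmin).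
    exists (1/2 - dot p u); specialize (Hp u Hu); split; [lra | auto].
  - exists 1; split; [lra|]; intros u Hu Pu; exfalso; eauto.
Qed.

Lemma polygon_shift p d : tangent_polygon p -> unit_vec d ->
  (forall u, In u L -> dot p u = 1/2 -> dot d u = 0) ->
  exists e, 0 < e /\ tangent_polygon (shift p e d) /\ tangent_polygon (shift p (- e) d).
Proof.
  intros Hp Hd Hact; destruct (polygon_slack p Hp) as (e & He & Hslack).
  assert (Hs : forall s, - e <= s <= e -> tangent_polygon (shift p s d)).
  { intros s Hs u Hu; rewrite dot_shift.
    destruct (Req_dec (dot p u) (1/2)) as [E|E]; [rewrite (Hact u Hu E); lra|].
    specialize (Hslack u Hu E).
    pose proof (unit_dot_le1 d u Hd (L_unit u Hu));
      pose proof (unit_dot_ge_m1 d u Hd (L_unit u Hu)).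
    nra. }
  exists e; split; [lra | split; apply Hs; lra].
Qed.

(* A point of the polygon on fewer than two edge lines can be moved both ways
   along a direction parallel to that edge, so it is not extreme. *)
Lemma vertex_two_active p : vertex tangent_polygon p ->
  exists u w, In u L /\ In w L /\ u <> w /\ dot p u = 1/2 /\ dot p w = 1/2.
Proof.
  intros [Hp Hext]; apply NNPP; intros Hno.
  assert (Hd : exists d, unit_vec d /\ forall u, In u L -> dot p u = 1/2 -> dot d u = 0).
  { destruct (classic (exists u, In u L /\ dot p u = 1/2)) as [[u [Hu Du]]|Hnone].
    - exists (- snd u, fst u); split.
      + pose proof (L_unit u Hu); unfold unit_vec in *; simpl; lra.
      + intros w Hw Dw; destruct (classic (w = u)) as [->|Hwu]; [unfold dot; simpl; ring|].
        exfalso; apply Hno; exists w, u; auto.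
    - exists (1, 0); split; [unfold unit_vec; simpl; lra|].
      intros u Hu Du; exfalso; eauto. }
  destruct Hd as (d & Hd & Hperp).
  destruct (polygon_shift p d Hp Hd Hperp) as (e & He & H1 & H2).
  apply Hext; exists (shift p e d), (shift p (- e) d), (1/2).
  split; [|split; [|split; [|split]]]; auto;
    [| lra | destruct p; unfold shift; simpl; f_equal; field].
  unfold shift; intros E; injection E as E1 E2.
  assert (D1 : fst d = 0) by nra; assert (D2 : snd d = 0) by nra.
  unfold unit_vec in Hd; rewrite D1, D2 in Hd; lra.
Qed.

Lemma two_active_vertex p u w : tangent_polygon p -> In u L -> In w L -> u <> w ->
  dot p u = 1/2 -> dot p w = 1/2 -> vertex tangent_polygon p.
Proof.
  intros Hp Hu Hw Huw Du Dw; split; auto.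
  intros (x & y & t & Hx & Hy & Hxy & Ht & E); apply Hxy.
  assert (Tight : forall v, In v L -> dot p v = 1/2 -> dot x v = 1/2 /\ dot y v = 1/2).
  { intros v Hv Dv; rewrite E, dot_convex_comb in Dv.
    specialize (Hx v Hv); specialize (Hy v Hv); split; nra. }
  destruct (Tight u Hu Du), (Tight w Hw Dw).
  apply (tangents_meet_once u w); auto.
Qed.

(* The normal following [u] counterclockwise: its tangent line is the first one
   met when walking along the tangent line of [u] in the positive direction. *)
Definition next_normal (u w : point) : Prop :=
  In w L /\ 0 < cross u w /\
  forall w', In w' L -> 0 < cross u w' -> meet_param u w <= meet_param u w'.

Lemma corner_in_polygon u w : In u L -> next_normal u w -> tangent_polygon (corner u w).
Proof.
  intros Hu (Hw & Cw & Hmin) v Hv; unfold corner; rewrite dot_tangent_pt.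
  pose proof (unit_dot_le1 u v (L_unit u Hu) (L_unit v Hv)).
  assert (Hpos : 0 < meet_param u w).
  { assert (Huw : u <> w) by (intros <-; rewrite cross_self in Cw; lra).
    pose proof (unit_dot_lt1 u w (L_unit u Hu) (L_unit w Hw) Huw).
    unfold meet_param; apply Rdiv_lt_0_compat; lra. }
  destruct (Rlt_dec 0 (cross u v)) as [Cv|Cv].
  - assert (Hle : meet_param u w * cross u v <= meet_param u v * cross u v)
      by (apply Rmult_le_compat_r; [lra | auto]).
    rewrite meet_param_cross in Hle by lra; lra.
  - assert (0 <= meet_param u w * - cross u v) by (apply Rmult_le_pos; lra); lra.
Qed.

Lemma polygon_point_is_corner p u w v : tangent_polygon p -> In u L -> In w L ->
  dot p u = 1/2 -> dot p w = 1/2 -> 0 < cross u w -> next_normal u v -> p = corner u v.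
Proof.
  intros Hp Hu Hw Du Dw Cuw (Hv & Cuv & Hmin).
  pose proof (tangent_pt_cross u p (L_unit u Hu) Du) as Ep.
  assert (Hle : forall j, In j L -> 0 < cross u j -> cross u p <= meet_param u j).
  { intros j Hj Cj; pose proof (Hp j Hj) as Pj; rewrite Ep, dot_tangent_pt in Pj.
    apply (Rmult_le_reg_r (cross u j)); [auto | rewrite meet_param_cross; lra]. }
  assert (Heq : cross u p = meet_param u w).
  { rewrite Ep, dot_tangent_pt in Dw.
    apply (Rmult_eq_reg_r (cross u w)); [rewrite meet_param_cross; lra | lra]. }
  rewrite Ep at 1; unfold corner; f_equal.
  pose proof (Hmin w Hw Cuw); pose proof (Hle v Hv Cuv); lra.
Qed.

Lemma corner_injective u u' v v' : In u L -> In u' L -> next_normal u v -> next_normal u' v' ->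
  corner u v = corner u' v' -> u = u'.
Proof.
  intros Hu Hu' (Hv & Cv & _) (Hv' & Cv' & _) E.
  assert (Nv : u <> v) by (intros <-; rewrite cross_self in Cv; lra).
  assert (Nv' : u' <> v') by (intros <-; rewrite cross_self in Cv'; lra).
  pose proof (corner_on_tangent_l u v (L_unit u Hu)) as A1.
  pose proof (corner_on_tangent_r u v ltac:(lra)) as A2.
  pose proof (corner_on_tangent_l u' v' (L_unit u' Hu')) as B1.
  pose proof (corner_on_tangent_r u' v' ltac:(lra)) as B2.
  rewrite <- E in B1, B2; apply NNPP; intros Hne.
  assert (v = u').
  { destruct (at_most_two_tangents _ u v u' (L_unit u Hu) (L_unit v Hv) (L_unit u' Hu') A1 A2 B1)
      as [|[|]]; tauto. }
  assert (v' = u).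
  { destruct (at_most_two_tangents _ u' v' u (L_unit u' Hu') (L_unit v' Hv') (L_unit u Hu) B1 B2 A1)
      as [|[|]]; [tauto | congruence | auto]. }
  subst; rewrite cross_anti in Cv'; lra.
Qed.

Hypothesis L_nodup : NoDup L.
Hypothesis L_ccw : forall u, In u L -> exists w, In w L /\ 0 < cross u w.

Lemma next_normal_exists u : In u L -> exists w, next_normal u w.
Proof.
  intros Hu; destruct (exists_argmin _ (meet_param u) L (L_ccw u Hu)) as (w & Hw & Cw & Hmin).
  exists w; repeat split; auto.
Qed.

Theorem tangent_polygon_vertices :
  exists S, NoDup S /\ length S = length L /\ forall p, In p S <-> vertex tangent_polygon p.
Proof.
  destruct (choice (fun u w => In u L -> next_normal u w)) as [nx Hnx].
  { intros u; destruct (classic (In u L)) as [Hu|Hu].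
    - destruct (next_normal_exists u Hu) as [w Hw]; eauto.
    - exists u; tauto. }
  exists (map (fun u => corner u (nx u)) L); split; [|split].
  - apply NoDup_map_NoDup_ForallPairs; auto.
    intros u u' Hu Hu'; apply corner_injective; auto.
  - apply length_map.
  - intros p; rewrite in_map_iff; split.
    + intros (u & <- & Hu); pose proof (Hnx u Hu) as Hn; destruct Hn as (Hw & Cw & _).
      apply (two_active_vertex _ u (nx u)); auto using corner_in_polygon, corner_on_tangent_l.
      * intros E; rewrite <- E, cross_self in Cw; lra.
      * apply corner_on_tangent_r; lra.
    + intros Hv; destruct (vertex_two_active p Hv) as (u & w & Hu & Hw & Huw & Du & Dw).
      pose proof (tangents_not_parallel p u w (L_unit u Hu) (L_unit w Hw) Huw Du Dw) as Cuw.
      destruct (Rlt_dec 0 (cross u w)) as [C|C].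
      * exists u; split; [symmetry; apply (polygon_point_is_corner p u w) | ]; auto; apply Hv.
      * exists w; split; [symmetry; apply (polygon_point_is_corner p w u) | ]; auto; [apply Hv|].
        rewrite cross_anti; lra.
Qed.

End TangentPolygon.

Definition inscribed_equilateral (A B Q : point) : Prop :=
  unit_vec A /\ unit_vec B /\ unit_vec Q /\
  dot A B = -1/2 /\ dot B Q = -1/2 /\ dot Q A = -1/2 /\
  fst A + fst B + fst Q = 0 /\ snd A + snd B + snd Q = 0.

Lemma inscribed_equilateral_of_sqdist A B Q :
  on_circle A -> on_circle B -> on_circle Q ->
  0 < sqdist A B -> sqdist A B = sqdist B Q -> sqdist B Q = sqdist Q A ->
  inscribed_equilateral A B Q.
Proof.
  intros HA HB HQ H0 H1 H2;
    fold (unit_vec A) in HA; fold (unit_vec B) in HB; fold (unit_vec Q) in HQ.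
  rewrite !sqdist_unit in * by auto.
  set (c := dot A B) in *.
  assert (EBQ : dot B Q = c) by lra; assert (EQA : dot Q A = c) by lra.
  (* the Gram determinant of three plane vectors vanishes *)
  assert (Det : dot A A * (dot B B * dot Q Q - dot B Q * dot B Q)
              - dot A B * (dot A B * dot Q Q - dot B Q * dot Q A)
              + dot Q A * (dot A B * dot B Q - dot B B * dot Q A) = 0) by (unfold dot; ring).
  rewrite EBQ, EQA, !dot_unit_self in Det by auto; fold c in Det.
  assert (Gram : (1 - c) * (1 - c) * (1 + 2 * c) = 0) by (rewrite <- Det; ring).
  assert (Hc : c = -1/2).
  { apply Rmult_integral in Gram; destruct Gram as [E|E]; [apply Rmult_integral in E|]; lra. }
  assert (Sum : (fst A + fst B + fst Q) ^ 2 + (snd A + snd B + snd Q) ^ 2 = 0).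
  { transitivity (dot A A + dot B B + dot Q Q + 2 * (dot A B + dot B Q + dot Q A));
      [unfold dot; ring|].
    rewrite !dot_unit_self, EBQ, EQA by auto; fold c; lra. }
  apply sum_sq_eq0 in Sum; unfold inscribed_equilateral; fold c; repeat split; tauto || lra.
Qed.

Lemma inscribed_equilateral_rot A B Q : inscribed_equilateral A B Q -> inscribed_equilateral B Q A.
Proof. unfold inscribed_equilateral; intros; intuition lra. Qed.

Lemma inscribed_equilateral_cross A B Q : inscribed_equilateral A B Q ->
  cross A B <> 0 /\ cross A Q = - cross A B.
Proof.
  intros (HA & HB & _ & DAB & _ & _ & S1 & S2); split.
  - intros C; pose proof (lagrange_identity A B) as L; rewrite HA, HB, C, DAB in L; lra.
  - unfold cross; replace (fst Q) with (- fst A - fst B) by lra;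
      replace (snd Q) with (- snd A - snd B) by lra; ring.
Qed.

Lemma dot_barycentric a b c A B Q X :
  dot (a * fst A + b * fst B + c * fst Q, a * snd A + b * snd B + c * snd Q) X
  = a * dot A X + b * dot B X + c * dot Q X.
Proof. unfold dot; simpl; ring. Qed.

Lemma triangle_iff_halfplanes A B Q p : inscribed_equilateral A B Q ->
  Defs.triangle A B Q p <-> forall X, In X [A; B; Q] -> -1/2 <= dot p X.
Proof.
  intros HE; pose proof HE as (HA & HB & HQ & DAB & DBQ & DQA & S1 & S2).
  pose proof (dot_unit_self A HA) as UA; pose proof (dot_unit_self B HB) as UB;
    pose proof (dot_unit_self Q HQ) as UQ.
  assert (DBA : dot B A = -1/2) by (rewrite dot_comm; auto).
  assert (DQB : dot Q B = -1/2) by (rewrite dot_comm; auto).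
  assert (DAQ : dot A Q = -1/2) by (rewrite dot_comm; auto).
  split.
  - intros (a & b & c & Ha & Hb & Hc & Hs & ->) X HX.
    rewrite dot_barycentric.
    destruct HX as [<-|[<-|[<-|[]]]];
      rewrite ?UA, ?UB, ?UQ, ?DAB, ?DBA, ?DBQ, ?DQB, ?DQA, ?DAQ; lra.
  - intros Hp; pose proof (Hp A ltac:(simpl; auto)) as PA;
      pose proof (Hp B ltac:(simpl; auto)) as PB; pose proof (Hp Q ltac:(simpl; auto)) as PQ.
    assert (Sum : dot p A + dot p B + dot p Q = 0).
    { transitivity (fst p * (fst A + fst B + fst Q) + snd p * (snd A + snd B + snd Q));
        [unfold dot; ring | rewrite S1, S2; ring]. }
    exists ((2 * dot p A + 1) / 3), ((2 * dot p B + 1) / 3), ((2 * dot p Q + 1) / 3).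
    do 4 (split; [lra|]).
    apply (eq_of_dot_independent A B); [apply (inscribed_equilateral_cross A B Q HE) | |];
      rewrite dot_barycentric; rewrite ?UA, ?UB, ?DAB, ?DBA, ?DQB, ?DQA, ?DAQ; lra.
Qed.

Lemma inscribed_equilateral_other_vertex A B Q Y : inscribed_equilateral A B Q ->
  unit_vec Y -> dot A Y = -1/2 -> Y = B \/ Y = Q.
Proof.
  intros (HA & HB & HQ & DAB & DBQ & DQA & _) HY DAY.
  assert (HBQ : B <> Q) by (intros <-; rewrite dot_unit_self in DBQ by auto; lra).
  assert (Tangent : forall X, dot A X = -1/2 -> dot (opp A) X = 1/2)
    by (intros X DX; unfold dot, opp in *; simpl; lra).
  rewrite dot_comm in DQA.
  destruct (at_most_two_tangents (opp A) B Q Y HB HQ HY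
              (Tangent B DAB) (Tangent Q DQA) (Tangent Y DAY)) as [E|[E|E]];
    [contradiction | left | right]; auto.
Qed.

Lemma tangent_polygon_map_opp l p :
  tangent_polygon (map opp l) p <-> forall X, In X l -> -1/2 <= dot p X.
Proof.
  split; intros H X HX.
  - specialize (H (opp X) (in_map _ _ _ HX)); rewrite dot_opp_r in H; lra.
  - apply in_map_iff in HX as (Y & <- & HY); rewrite dot_opp_r; specialize (H Y HY); lra.
Qed.

Definition equilateral_frame (l : list point) : Prop :=
  exists A B Q, l = [A; B; Q] /\ inscribed_equilateral A B Q.

Lemma frame_of_in_E T : in_E T ->
  exists l, equilateral_frame l /\ forall p, T p <-> tangent_polygon (map opp l) p.
Proof.
  intros (_ & A & B & Q & HA & HB & HQ & H0 & H1 & H2 & HT).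
  pose proof (inscribed_equilateral_of_sqdist A B Q HA HB HQ H0 H1 H2) as HE.
  exists [A; B; Q]; split; [exists A, B, Q; auto|].
  intros p; rewrite HT, triangle_iff_halfplanes, tangent_polygon_map_opp by auto; reflexivity.
Qed.

Lemma frame_length l : equilateral_frame l -> length l = 3%nat.
Proof. intros (A & B & Q & -> & _); reflexivity. Qed.

Lemma frame_unit l X : equilateral_frame l -> In X l -> unit_vec X.
Proof. intros (A & B & Q & -> & HA & HB & HQ & _) [<-|[<-|[<-|[]]]]; auto. Qed.

Lemma frame_nodup l : equilateral_frame l -> NoDup l.
Proof.
  intros (A & B & Q & -> & HA & HB & HQ & DAB & DBQ & DQA & _).
  assert (Hne : forall X Y, unit_vec X -> dot X Y = -1/2 -> X <> Y)
    by (intros X Y HX D <-; rewrite dot_unit_self in D by auto; lra).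
  pose proof (Hne A B HA DAB); pose proof (Hne B Q HB DBQ); pose proof (Hne Q A HQ DQA).
  repeat constructor; simpl; intuition congruence.
Qed.

Lemma frame_rotate l X : equilateral_frame l -> In X l ->
  exists Y Z, inscribed_equilateral X Y Z /\ forall P, In P l <-> In P [X; Y; Z].
Proof.
  intros (A & B & Q & -> & HE) HX.
  pose proof (inscribed_equilateral_rot _ _ _ HE) as HE1.
  pose proof (inscribed_equilateral_rot _ _ _ HE1) as HE2.
  destruct HX as [<-|[<-|[<-|[]]]]; [exists B, Q | exists Q, A | exists A, B];
    split; auto; simpl; tauto.
Qed.

Lemma frame_ccw l X : equilateral_frame l -> In X l -> exists Y, In Y l /\ 0 < cross X Y.
Proof.
  intros Hl HX; destruct (frame_rotate l X Hl HX) as (Y & Z & HE & El).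
  destruct (inscribed_equilateral_cross X Y Z HE) as [CY CZ].
  destruct (Rlt_dec 0 (cross X Y)); [exists Y | exists Z]; rewrite El; simpl; split; auto; lra.
Qed.

Lemma frame_incl_of_common l l' X : equilateral_frame l -> equilateral_frame l' ->
  In X l -> In X l' -> incl l l'.
Proof.
  intros Hl Hl' HX HX'.
  destruct (frame_rotate l X Hl HX) as (Y & Z & HE & El).
  destruct (frame_rotate l' X Hl' HX') as (Y' & Z' & HE' & El').
  pose proof HE as (_ & HY & HZ & DXY & _ & DZX & _); rewrite dot_comm in DZX.
  intros P HP; apply El in HP; apply El'.
  destruct HP as [<-|[<-|[<-|[]]]]; [now left | |].
  - destruct (inscribed_equilateral_other_vertex X Y' Z' Y HE' HY DXY) as [-> | ->]; simpl; auto.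
  - destruct (inscribed_equilateral_other_vertex X Y' Z' Z HE' HZ DZX) as [-> | ->]; simpl; auto.
Qed.

Lemma opp_involutive u : opp (opp u) = u.
Proof. destruct u; unfold opp; simpl; f_equal; ring. Qed.

Lemma NoDup_flat_map {A B : Type} (f : A -> list B) (l : list A) :
  NoDup l -> (forall x, In x l -> NoDup (f x)) ->
  (forall x y b, In x l -> In y l -> In b (f x) -> In b (f y) -> x = y) ->
  NoDup (flat_map f l).
Proof.
  induction 1 as [|x l Hx Hl IH]; intros Hf Hdisj; simpl; [constructor|].
  apply NoDup_app.
  - apply Hf; left; auto.
  - apply IH; [intros y Hy; apply Hf | intros y z b Hy Hz; apply Hdisj]; simpl; auto.
  - intros b Hb Hb'; apply in_flat_map in Hb' as (y & Hy & Hby).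
    assert (x = y) by (apply (Hdisj x y b); simpl; auto); subst; contradiction.
Qed.

Lemma vertex_ext (K K' : point -> Prop) : (forall p, K p <-> K' p) ->
  forall p, vertex K p <-> vertex K' p.
Proof.
  intros H p; unfold vertex; split; intros [Kp Hext]; (split; [apply H; auto|]);
    intros (x & y & t & Kx & Ky & Hrest); apply Hext; exists x, y, t;
    (split; [|split]); try apply H; auto.
Qed.

Section TriangleFamily.

Variables (n : nat) (T : nat -> point -> Prop) (V : nat -> list point).
Hypothesis V_frame : forall i, (i < n)%nat -> equilateral_frame (V i).
Hypothesis V_region :
  forall i, (i < n)%nat -> forall p, T i p <-> tangent_polygon (map opp (V i)) p.

Definition normals : list point := map opp (flat_map V (seq 0 n)).

Lemma in_normals u : In u normals <-> exists i X, (i < n)%nat /\ In X (V i) /\ u = opp X.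
Proof.
  unfold normals; rewrite in_map_iff; split.
  - intros (X & <- & HX); apply in_flat_map in HX as (i & Hi & HX); apply in_seq in Hi.
    exists i, X; repeat split; auto; lia.
  - intros (i & X & Hi & HX & ->); exists X; split; auto.
    apply in_flat_map; exists i; split; auto; apply in_seq; lia.
Qed.

Lemma normals_length : length normals = (3 * n)%nat.
Proof.
  unfold normals; rewrite length_map, (flat_map_constant_length (c := 3%nat)), length_seq; [lia|].
  intros i Hi; apply in_seq in Hi; apply frame_length, V_frame; lia.
Qed.

Lemma normals_unit u : In u normals -> unit_vec u.
Proof.
  rewrite in_normals; intros (i & X & Hi & HX & ->).
  apply unit_vec_opp, (frame_unit (V i)); auto.
Qed.

Lemma normals_ccw u : In u normals -> exists w, In w normals /\ 0 < cross u w.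
Proof.
  rewrite in_normals; intros (i & X & Hi & HX & ->).
  destruct (frame_ccw (V i) X (V_frame i Hi) HX) as (Y & HY & C).
  exists (opp Y); rewrite cross_opp, in_normals; split; eauto.
Qed.

Lemma normals_polygon p : tangent_polygon normals p <-> big_inter n T p.
Proof.
  split.
  - intros H i Hi; apply V_region; auto; intros u Hu; apply H.
    apply in_map_iff in Hu as (X & <- & HX); apply in_normals; eauto.
  - intros H u Hu; apply in_normals in Hu as (i & X & Hi & HX & ->).
    apply (V_region i Hi); auto; apply in_map; auto.
Qed.

Hypothesis T_distinct : forall i j, (i < n)%nat -> (j < n)%nat -> i <> j ->
  ~ (forall p, T i p <-> T j p).

Lemma normals_nodup : NoDup normals.
Proof.
  apply NoDup_map_NoDup_ForallPairs.
  { intros u v _ _ E; rewrite <- (opp_involutive u), <- (opp_involutive v), E; reflexivity. }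
  apply NoDup_flat_map; [apply seq_NoDup | |].
  { intros i Hi; apply in_seq in Hi; apply frame_nodup, V_frame; lia. }
  intros i j X Hi Hj HXi HXj; apply in_seq in Hi, Hj.
  assert (Fi : equilateral_frame (V i)) by (apply V_frame; lia).
  assert (Fj : equilateral_frame (V j)) by (apply V_frame; lia).
  destruct (Nat.eq_dec i j) as [|Hij]; auto; exfalso.
  apply (T_distinct i j ltac:(lia) ltac:(lia) Hij); intros p.
  rewrite !V_region, !tangent_polygon_map_opp by lia.
  pose proof (frame_incl_of_common (V i) (V j) X Fi Fj HXi HXj).
  pose proof (frame_incl_of_common (V j) (V i) X Fj Fi HXj HXi).
  split; intros H' Y HY; apply H'; auto.
Qed.

End TriangleFamily.

Theorem mainTheorem12 (n : nat) (T : nat -> point -> Prop) :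
  (2 <= n)%nat ->
  (forall i, (i < n)%nat -> in_E (T i)) ->
  (forall i j, (i < n)%nat -> (j < n)%nat -> i <> j ->
     ~ (forall p, T i p <-> T j p)) ->
  exists S : list point,
    NoDup S /\ length S = (3 * n)%nat /\
    (forall p, In p S <-> vertex (big_inter n T) p).
Proof.
  intros _ HE Hdistinct.
  destruct (choice (fun i l => (i < n)%nat ->
              equilateral_frame l /\ forall p, T i p <-> tangent_polygon (map opp l) p)) as [V HV].
  { intros i; destruct (Nat.lt_ge_cases i n) as [Hi|Hi].
    - destruct (frame_of_in_E _ (HE i Hi)) as [l Hl]; eauto.
    - exists nil; lia. }
  assert (Hframe : forall i, (i < n)%nat -> equilateral_frame (V i)) by apply HV.
  assert (Hregion : forall i, (i < n)%nat ->
            forall p, T i p <-> tangent_polygon (map opp (V i)) p) by apply HV.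
  destruct (tangent_polygon_vertices (normals n V) (normals_unit n V Hframe)
              (normals_nodup n T V Hframe Hregion Hdistinct) (normals_ccw n V Hframe))
    as (S & HS & Hlen & Hvert).
  exists S; split; [|split]; auto.
  - rewrite Hlen; apply normals_length, Hframe.
  - intros p; rewrite Hvert; apply vertex_ext, normals_polygon, Hregion.
Qed.
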